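(* Let $k\ge 1$ and $l\ge 1$ be integers and let $l_1=l_2=\cdots=l_k=l$. Then the generalized theta graph $\Theta_{l_1,l_2,\dots,l_k}$ is cyclically orderable.
   Context: The generalized theta graph $\Theta_{l_1,\dots,l_k}$ (with $l_1\le\cdots\le l_k$) is the graph obtained by joining two distinct vertices by $k$ internally vertex-disjoint paths of lengths $l_1,l_2,\dots,l_k$ (if several paths have length $1$ this yields parallel edges). A cyclic base ordering (CBO) of a connected graph $G$ is a bijection $\mathcal{O}:E(G)\to\{1,\dots,|E(G)|\}$ such that for every $i\in\{1,\dots,|E(G)|\}$ the edges $\mathcal{O}^{-1}(i),\dots,\mathcal{O}^{-1}(i+|V(G)|-2)$ (indices taken cyclically modulo $|E(G)|$) induce a spanning tree of $G$; $G$ is cyclically orderable if it has a CBO. *)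

From mathcomp Require Import all_boot.
Set Implicit Arguments. Unset Strict Implicit. Unset Printing Implicit Defensive.

(* A finite multigraph: vertex type V, edge type E, and for each edge its
   (unordered) pair of end-vertices [ends e] (parallel edges allowed). *)

Definition sub_adj (V E : finType) (ends : E -> V * V) (F : {set E}) : rel V :=
  [rel x y | [exists e in F, (ends e == (x, y)) || (ends e == (y, x))]].

(* F induces a spanning tree: the subgraph (V, F) is connected, and it is
   acyclic, i.e. every edge of F is a bridge of (V, F) (its endpoints are
   disconnected once it is removed; in particular F contains no loop and no
   pair of parallel edges). *)
Definition spanning_tree (V E : finType) (ends : E -> V * V) (F : {set E}) : Prop :=
  (forall x y : V, connect (sub_adj ends F) x y) /\
  (forall e, e \in F -> ~~ connect (sub_adj ends (F :\ e)) (ends e).1 (ends e).2).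

(* Cyclic base ordering, 0-indexed: O : E -> 'I_m (m = |E|) bijective, and for
   every i the edges with positions i, i+1, ..., i+|V|-2 (mod m) induce a
   spanning tree. *)
Definition cyclic_base_ordering (V E : finType) (ends : E -> V * V)
    (O : E -> 'I_#|E|) : Prop :=
  bijective O /\
  forall i : 'I_#|E|,
    spanning_tree ends [set e | (O e + #|E| - i) %% #|E| < #|V| - 1].

Definition cyclically_orderable (V E : finType) (ends : E -> V * V) : Prop :=
  exists O : E -> 'I_#|E|, cyclic_base_ordering ends O.

(* Vertices: 'I_(k*(l-1)+2); 0 and 1 are the two branch vertices; the j-th
   internal vertex (1 <= j <= l-1) of path i is 2 + i*(l-1) + (j-1).
   Edges: pairs (i, j) : 'I_k * 'I_l; edge (i,j) joins positions j and j+1 of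
   path i, where position 0 is vertex 0 and position l is vertex 1. *)
Definition theta_V (k l : nat) := 'I_(k * (l - 1)).+2.
Definition theta_E (k l : nat) := ('I_k * 'I_l)%type.

Definition theta_pos (k l : nat) (i : 'I_k) (j : nat) : nat :=
  if j == 0 then 0 else if j == l then 1 else 2 + i * (l - 1) + (j - 1).

Definition theta_ends (k l : nat) (e : theta_E k l) : theta_V k l * theta_V k l :=
  (inord (theta_pos l e.1 e.2), inord (theta_pos l e.1 e.2.+1)).

From mathcomp Require Import all_boot zify.
Set Implicit Arguments. Unset Strict Implicit. Unset Printing Implicit Defensive.

(* Rank edge j of path b as j * k + b, so that the edges are listed level by
   level.  A cyclic window of |V| - 1 = k (l - 1) + 1 consecutive ranks then
   contains every edge of the path b0 whose index is congruent to its start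
   modulo k, while the k - 1 ranks outside it are consecutive and hence hit
   every other path exactly once.  Keeping one path whole and deleting one edge
   from each of the others yields a spanning tree: it is connected through the
   whole path, and each of its edges is a bridge, separating either the side
   of the first branch vertex or a segment of a broken path. *)

Lemma eqn_mixed d q q' r r' : r < d -> r' < d ->
  (q * d + r == q' * d + r') = (q == q') && (r == r').
Proof.
move=> lt_rd lt_r'd; apply/eqP/andP => [eq_qr | [/eqP-> /eqP->]] //.
have d_gt0 : 0 < d by apply: leq_ltn_trans lt_rd.
split; apply/eqP.
- by have := congr1 (divn^~ d) eq_qr; rewrite !divnMDl // !divn_small // !addn0.
- by have := congr1 (modn^~ d) eq_qr; rewrite !modnMDl !modn_small.
Qed.

Definition cycle_offset (n i x : nat) : nat := (x + n - i) %% n.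

Section CycleOffset.
Variables n i : nat.
Hypothesis le_i_n : i <= n.

Lemma cycle_offsetDmod d x : d %| n -> cycle_offset n i x + i = x %[mod d].
Proof.
move=> dvd_dn; rewrite /cycle_offset -modnDml (modn_dvdm _ dvd_dn) modnDml.
by rewrite subnK ?(leq_trans le_i_n (leq_addl _ _)) // -modnDmr (eqP dvd_dn) addn0.
Qed.

Lemma cycle_offset_inj x y : x < n -> y < n ->
  cycle_offset n i x = cycle_offset n i y -> x = y.
Proof.
move=> lt_xn lt_yn eq_xy.
have := cycle_offsetDmod x (dvdnn n); rewrite eq_xy cycle_offsetDmod //.
by rewrite !modn_small.
Qed.

Lemma cycle_offset_lt x : 0 < n -> cycle_offset n i x < n.
Proof. by rewrite ltn_mod. Qed.

Lemma cycle_offsetK d : d < n -> cycle_offset n i ((i + d) %% n) = d.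
Proof.
move=> lt_dn; have n_gt0 : 0 < n := leq_ltn_trans (leq0n d) lt_dn.
rewrite -[RHS](modn_small lt_dn) -[LHS](modn_small (cycle_offset_lt _ n_gt0)).
by apply/eqP; rewrite -(eqn_modDr i) cycle_offsetDmod // modn_mod addnC.
Qed.

End CycleOffset.

Section CycleWindow.
Variables k m i : nat.
Hypothesis k_gt0 : 0 < k.
Hypothesis lt_i_km : i < k * m.
Local Notation n := (k * m).
Local Notation off := (cycle_offset n i).

Let m_gt0 : 0 < m.
Proof. by move: lt_i_km; rewrite lt0n; apply: contraTneq => ->; rewrite muln0. Qed.

Let km_split : k * m = k * (m - 1) + k.
Proof. by rewrite -mulnSr subn1 prednK // m_gt0. Qed.

Let off_lt x : off x < n.
Proof. by rewrite cycle_offset_lt // (leq_ltn_trans _ lt_i_km). Qed.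

Let off_modk x : off x + i = x %[mod k].
Proof. by rewrite cycle_offsetDmod ?(ltnW lt_i_km) ?dvdn_mulr. Qed.

Lemma window_residue x : x = i %[mod k] -> off x <= k * (m - 1).
Proof.
move=> eq_xi.
have /dvdnP [q off_eq] : k %| off x.
  by rewrite /dvdn -(mod0n k) -(eqn_modDr i) off_modk add0n eq_xi.
have := off_lt x; rewrite off_eq mulnC ltn_mul2l => /andP[_ lt_qm].
by rewrite leq_mul2l; apply/orP; right; lia.
Qed.

Let window_gap_div x : k * (m - 1) < off x -> off x %/ k = m - 1.
Proof.
move=> gt_off; apply/eqP; rewrite eqn_leq leq_divRL // [_ * k]mulnC (ltnW gt_off).
by rewrite -ltnS subn1 prednK ?m_gt0 // ltn_divLR // [_ * k]mulnC off_lt.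
Qed.

Lemma window_gap_uniq x y : x < n -> y < n -> x = y %[mod k] ->
  k * (m - 1) < off x -> k * (m - 1) < off y -> x = y.
Proof.
move=> lt_xn lt_yn eq_xy gap_x gap_y.
apply: (cycle_offset_inj (ltnW lt_i_km)) => //.
rewrite (divn_eq (off x) k) (divn_eq (off y) k) !window_gap_div //; congr (_ + _).
by apply/eqP; rewrite -(eqn_modDr i) !off_modk eq_xy.
Qed.

Lemma window_gap_exists b : b < k -> b != i %% k ->
  exists2 x, x < n & x %% k = b /\ k * (m - 1) < off x.
Proof.
(* The gap element of residue b sits at offset k (m - 1) + (b - i mod k). *)
move=> lt_bk ne_bi; set r := (b + k - i %% k) %% k.
have lt_rk : r < k by rewrite ltn_mod.
have lt_dn : k * (m - 1) + r < n by rewrite km_split ltn_add2l.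
have off_x := cycle_offsetK (ltnW lt_i_km) lt_dn.
have res_x : (i + (k * (m - 1) + r)) %% n %% k = b.
  rewrite modn_dvdm ?dvdn_mulr // addnCA [k * _]mulnC modnMDl -modnDml modnDmr.
  rewrite [i %% k + _]addnC subnK; first by rewrite modnDr modn_small.
  by rewrite (leq_trans (ltnW (ltn_pmod i k_gt0))) ?leq_addl.
exists ((i + (k * (m - 1) + r)) %% n); first by rewrite ltn_mod (leq_ltn_trans _ lt_i_km).
split=> //; rewrite off_x -[X in X < _]addn0 ltn_add2l lt0n.
apply: contraNneq ne_bi => r0.
by rewrite -res_x r0 addn0 modn_dvdm ?dvdn_mulr // addnC [k * _]mulnC modnMDl.
Qed.
End CycleWindow.

Section SpanningSubgraph.
Variables (V E : finType) (ends : E -> V * V).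
Implicit Types (F : {set E}) (e : E).

Lemma sub_adj_sym F : symmetric (sub_adj ends F).
Proof.
by move=> x y; apply/existsP/existsP => -[e /andP[eF xy]]; exists e; rewrite eF orbC.
Qed.

Lemma connect_ends F e : e \in F -> connect (sub_adj ends F) (ends e).1 (ends e).2.
Proof.
by move=> eF; apply: connect1; apply/existsP; exists e; rewrite eF -surjective_pairing eqxx.
Qed.

Lemma cut_disconnected F (S : pred V) x y :
  {in F, forall e, S (ends e).1 = S (ends e).2} -> S x != S y ->
  ~~ connect (sub_adj ends F) x y.
Proof.
move=> S_F; apply: contra => /(@closed_connect _ _ S) S_xy; apply/eqP/S_xy.
move=> u v /existsP[e /andP[eF /orP[]/eqP ends_e]]; have := S_F e eF;
  by rewrite ends_e => S_uv; rewrite !unfold_in S_uv.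
Qed.

End SpanningSubgraph.

Section ThetaGraph.
Variables k l : nat.
Hypotheses (k_gt0 : 0 < k) (l_gt0 : 0 < l).
Local Notation V := (theta_V k l).
Local Notation E := (theta_E k l).
Local Notation ends := (@theta_ends k l).
Implicit Types (F : {set E}) (e : E) (b : 'I_k).

Definition theta_vertex (b : 'I_k) (p : nat) : V := inord (theta_pos l b p).

Lemma theta_endsE e : ends e = (theta_vertex e.1 e.2, theta_vertex e.1 e.2.+1).
Proof. by []. Qed.

Lemma theta_vertexK b p : p <= l -> theta_vertex b p = theta_pos l b p :> nat.
Proof.
move=> le_pl; rewrite inordK // /theta_pos.
case: eqP => // p_gt0; case: eqP => // ne_pl.
have : b.+1 * (l - 1) <= k * (l - 1) by rewrite leq_mul2r ltn_ord orbT.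
by rewrite mulSn; lia.
Qed.

Lemma theta_pos_inner b p : 0 < p -> p < l -> theta_pos l b p = 2 + (b * (l - 1) + (p - 1)).
Proof. by move=> p_gt0 p_lt_l; rewrite /theta_pos addnA !ifN_eq //; lia. Qed.

Lemma theta_pos_end b : theta_pos l b l = 1.
Proof. by rewrite /theta_pos eqxx; case: eqP => //; lia. Qed.

Lemma theta_vertex_eq b (b' : 'I_k) p p' : p <= l -> p' <= l ->
  (theta_vertex b p == theta_vertex b' p') = (p == p') && [|| p == 0, p == l | b == b'].
Proof.
move=> le_pl le_p'l; rewrite -val_eqE /= !theta_vertexK //.
have theta_pos0 c : theta_pos l c 0 = 0 by [].
have pos_cases q : q <= l -> q = 0 \/ q = l \/ 0 < q /\ q < l by lia.
case: (pos_cases p le_pl) => [->|[->|[p_gt0 p_lt_l]]];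
  case: (pos_cases p' le_p'l) => [->|[->|[p'_gt0 p'_lt_l]]];
  rewrite ?theta_pos0 ?theta_pos_end ?theta_pos_inner ?eqxx ?orbT ?andbT //=.
(* lia only sees through the product [_ * (l - 1)] once it is abstracted. *)
all: try by try move: (_ * (l - 1)) => X; apply/eqP/idP; lia.
rewrite eqn_add2l eqn_mixed; try lia.
have -> : (p - 1 == p' - 1) = (p == p') by lia.
by rewrite (gtn_eqF p_gt0) (ltn_eqF p_lt_l) andbC.
Qed.

Lemma theta_vertex0 b (b' : 'I_k) : theta_vertex b 0 = theta_vertex b' 0.
Proof. by []. Qed.

Lemma theta_vertex_end b (b' : 'I_k) : theta_vertex b l = theta_vertex b' l.
Proof. by apply/eqP; rewrite theta_vertex_eq // eqxx orbT. Qed.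

Lemma theta_vertex_surj (v : V) : exists b p, p <= l /\ v = theta_vertex b p.
Proof.
have [v_lt2 | v_ge2] := ltnP v 2.
  have [v0 | v1] : v = 0 :> nat \/ v = 1 :> nat by lia.
    by exists (Ordinal k_gt0), 0; split=> //; apply: val_inj => /=; rewrite theta_vertexK.
  by exists (Ordinal k_gt0), l; split=> //; apply: val_inj => /=; rewrite theta_vertexK ?theta_pos_end.
have v_lt : v - 2 < k * (l - 1) by rewrite ltn_subLR // add2n.
have /andP[_ l1_gt0] : (0 < k) && (0 < l - 1).
  by rewrite -muln_gt0 (leq_ltn_trans _ v_lt).
have q_lt : (v - 2) %/ (l - 1) < k by rewrite ltn_divLR.
have r_lt := ltn_pmod (v - 2) l1_gt0.
exists (Ordinal q_lt), ((v - 2) %% (l - 1)).+1; split; first by lia.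
apply: val_inj => /=; rewrite theta_vertexK ?theta_pos_inner; try lia.
by rewrite subSS subn0 -divn_eq subnKC.
Qed.

Lemma connect_theta_path F b p q : p <= q <= l ->
  (forall t : 'I_l, p <= t < q -> (b, t) \in F) ->
  connect (sub_adj ends F) (theta_vertex b p) (theta_vertex b q).
Proof.
elim: q => [|q IHq] /andP[le_pq le_ql] path_F; first by rewrite leqn0 in le_pq; rewrite (eqP le_pq).
rewrite leq_eqVlt ltnS in le_pq; case/orP: le_pq => [/eqP-> // | le_pq].
apply: (connect_trans (IHq _ _)) => [|t /andP[le_pt lt_tq]|].
- by rewrite le_pq ltnW.
- by apply: path_F; rewrite le_pt ltnW.
by apply: (@connect_ends _ _ ends F (b, Ordinal le_ql)); apply: path_F; rewrite le_pq /=.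
Qed.

Definition theta_side (g : 'I_k -> nat -> bool) : pred V :=
  fun v => [exists b, exists p : 'I_l.+1, (v == theta_vertex b p) && g b p].

Section ThetaSide.
Variable g : 'I_k -> nat -> bool.
Hypotheses (g0 : forall b b', g b 0 = g b' 0) (gl : forall b b', g b l = g b' l).

Lemma theta_sideE b p : p <= l -> theta_side g (theta_vertex b p) = g b p.
Proof.
move=> le_pl; apply/existsP/idP => [[b' /existsP[p' /andP[]]] | g_bp].
  rewrite (theta_vertex_eq _ _ le_pl (ltn_ord p')) => /andP[/eqP<- /or3P[/eqP-> | /eqP-> | /eqP<-]] //.
    by rewrite (g0 b b').
  by rewrite (gl b b').
by exists b; apply/existsP; exists (Ordinal (le_pl : p < l.+1)); rewrite eqxx.
Qed.

Lemma theta_side_bridge F e : {in F, forall f : E, g f.1 f.2 = g f.1 f.2.+1} ->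
  g e.1 e.2 != g e.1 e.2.+1 -> ~~ connect (sub_adj ends F) (ends e).1 (ends e).2.
Proof.
move=> g_F; rewrite theta_endsE /=.
rewrite -(theta_sideE e.1 (ltnW (ltn_ord e.2))) -(theta_sideE e.1 (ltn_ord e.2)).
move=> ne_side; apply: (cut_disconnected _ ne_side) => f /g_F.
by rewrite theta_endsE /= !theta_sideE // ltnW.
Qed.

End ThetaSide.

Definition theta_cut (a : 'I_k) (c : 'I_k -> 'I_l) : {set E} :=
  [set e | (e.1 == a) || (e.2 != c e.1)].

Section ThetaCut.
Variables (a : 'I_k) (c : 'I_k -> 'I_l).
Local Notation F := (theta_cut a c).

Lemma theta_cut_connected x y : connect (sub_adj ends F) x y.
Proof.
have symF := sym_connect_sym (sub_adj_sym ends F).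
suff from_root v : connect (sub_adj ends F) (theta_vertex a 0) v.
  by apply: connect_trans (from_root y); rewrite symF from_root.
have [b [p [le_pl ->]]] := theta_vertex_surj v.
have in_F (b' : 'I_k) (t : 'I_l) : (b' == a) || (t != c b' :> nat) -> (b', t) \in F.
  by rewrite inE.
have [-> | ne_ba] := eqVneq b a.
  by apply: connect_theta_path => [|t _]; rewrite ?le_pl ?in_F ?eqxx.
have [le_pc | lt_cp] := leqP p (c b).
  rewrite (theta_vertex0 a b); apply: connect_theta_path => [|t /andP[_ lt_tp]].
    by rewrite le_pl.
  by rewrite in_F // (ltn_eqF (leq_trans lt_tp le_pc)) orbT.
apply: (connect_trans (y := theta_vertex a l)).
  by apply: connect_theta_path => [|t _]; rewrite ?leqnn ?in_F ?eqxx.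
rewrite symF (theta_vertex_end a b); apply: connect_theta_path => [|t /andP[le_pt _]].
  by rewrite le_pl leqnn.
by rewrite in_F // (gtn_eqF (leq_trans lt_cp le_pt)) orbT.
Qed.

Lemma theta_cut_bridge e : e \in F -> ~~ connect (sub_adj ends (F :\ e)) (ends e).1 (ends e).2.
Proof.
case: e => b j e_in; rewrite inE /= in e_in.
have in_FD (b' : 'I_k) (t : 'I_l) : (b', t) \in F :\ (b, j) ->
    ((b' != b) || (t != j :> nat)) && ((b' == a) || (t != c b' :> nat)).
  by rewrite !inE xpair_eqE negb_and.
have [ba | ne_ba] := eqVneq b a.
  pose cut (b' : 'I_k) : 'I_l := if b' == a then j else c b'.
  apply: (@theta_side_bridge (fun b' p => p <= cut b')) => //= [b1 b2 | [b' t] /in_FD /=|].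
  - by rewrite leqNgt ltn_ord [l <= _]leqNgt ltn_ord.
  - rewrite /cut -ba; case: eqVneq => [-> | _] /=; rewrite ?andbT => ne_t.
      by rewrite ltn_neqAle ne_t.
    by rewrite ltn_neqAle ne_t.
  - by rewrite /cut ba eqxx leqnn ltnn.
have ne_jc : j != c b :> nat by move: e_in; rewrite (negbTE ne_ba).
apply: (@theta_side_bridge (fun b' p => (b' == b) && (minn j (c b) < p <= maxn j (c b))))
  => //= [b1 b2 | b1 b2 | [b' t] /in_FD /=|].
- by rewrite !andbF.
- by rewrite [l <= _]leqNgt gtn_max !ltn_ord /= !andbF.
- case: eqVneq => [-> | _] //=; rewrite (negbTE ne_ba) /= => /andP[ne_tj ne_tc]; lia.
- rewrite eqxx /=; lia.
Qed.

Lemma theta_cut_spanning_tree : spanning_tree ends F.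
Proof. by split; [exact: theta_cut_connected | exact: theta_cut_bridge]. Qed.

End ThetaCut.

Lemma card_theta_E : #|{: E}| = k * l.
Proof. by rewrite card_prod !card_ord. Qed.

Definition theta_rank e : nat := e.2 * k + e.1.

Lemma theta_rank_mod e : theta_rank e %% k = e.1.
Proof. by rewrite modnMDl modn_small. Qed.

Lemma theta_rank_div e : theta_rank e %/ k = e.2.
Proof. by rewrite divnMDl // divn_small ?addn0. Qed.

Lemma theta_rank_lt e : theta_rank e < #|{: E}|.
Proof.
rewrite card_theta_E mulnC (leq_trans (_ : _ < e.2.+1 * k)) //.
  by rewrite mulSn addnC ltn_add2l.
by rewrite leq_mul2r ltn_ord orbT.
Qed.

Definition theta_order e : 'I_#|{: E}| := Ordinal (theta_rank_lt e).

Lemma theta_order_bij : bijective theta_order.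
Proof.
apply: inj_card_bij; last by rewrite card_ord.
move=> e e' /(congr1 val) /= eq_rank.
rewrite [e]surjective_pairing [e']surjective_pairing; congr pair; apply: val_inj => /=.
  by rewrite -(theta_rank_mod e) -(theta_rank_mod e') eq_rank.
by rewrite -(theta_rank_div e) -(theta_rank_div e') eq_rank.
Qed.

Lemma theta_window_gap i b : i < k * l -> b != i %% k :> nat ->
  exists t : 'I_l, forall t' : 'I_l,
    (cycle_offset (k * l) i (theta_rank (b, t')) <= k * (l - 1)) = (t' != t).
Proof.
move=> lt_i ne_bi.
have [x lt_x [x_mod x_gap]] := window_gap_exists k_gt0 lt_i (ltn_ord b) ne_bi.
have lt_t : x %/ k < l by rewrite ltn_divLR // mulnC.
have x_rank : x = theta_rank (b, Ordinal lt_t) by rewrite /theta_rank /= -x_mod -divn_eq.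
exists (Ordinal lt_t) => t; apply/idP/idP.
  by apply: contraTneq => ->; rewrite -x_rank -ltnNge.
apply: contraR; rewrite -ltnNge => t_gap; apply/eqP/val_inj => /=.
have <- : theta_rank (b, t) = x.
  apply: (window_gap_uniq k_gt0 lt_i _ lt_x _ t_gap x_gap).
    by rewrite -card_theta_E theta_rank_lt.
  by rewrite theta_rank_mod x_mod.
by rewrite theta_rank_div.
Qed.

Lemma theta_window_cut (i : 'I_#|{: E}|) : exists a c,
  [set e | (theta_order e + #|{: E}| - i) %% #|{: E}| < #|{: V}| - 1] = theta_cut a c.
Proof.
case: i => i lt_iE; have lt_i : i < k * l by rewrite -card_theta_E.
pose a := Ordinal (ltn_pmod i k_gt0).
have /fin_all_exists [c gap_c] : forall b, exists c_b : 'I_l, b != a -> forall t,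
    (cycle_offset (k * l) i (theta_rank (b, t)) <= k * (l - 1)) = (t != c_b).
  move=> b; have [-> | ne_ba] := eqVneq b a.
    by exists (Ordinal l_gt0).
  by have [t gap_t] := theta_window_gap lt_i ne_ba; exists t.
exists a, c; apply/setP => -[b t]; rewrite !inE /= card_ord subn1 ltnS card_theta_E.
have [-> | ne_ba] := eqVneq b a; last by rewrite gap_c.
by rewrite window_residue // theta_rank_mod.
Qed.

End ThetaGraph.

Theorem mainTheorem9 (k l : nat) (hk : 1 <= k) (hl : 1 <= l) :
  @cyclically_orderable (theta_V k l) (theta_E k l) (@theta_ends k l).
Proof.
exists (@theta_order k l); split; first exact: theta_order_bij.
move=> i; have [a [c ->]] := theta_window_cut hk hl i.
exact: theta_cut_spanning_tree.
Qed.
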